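(* Let $p$ be a prime, $q=p^r$, $\mathscr{C}\subseteq\mathbb{F}_q^n$ a linear code of dimension $k$ and $\mathscr{D}\subseteq\mathbb{F}_{q^k}^m$ a linear code of dimension $s$ with $0<s<m$ such that for every $1\le i\le m$ some codeword of $\mathscr{D}$ has $i$-th coordinate equal to $1$. Let $H$ and $H'$ be $\mathrm{BH}(q^k,p)$ matrices with rows indexed by $\mathbb{F}_{q^k}$ and columns indexed by $\mathscr{C}$. If $Q_H(\mathscr{C},\mathscr{D})=Q_{H'}(\mathscr{C},\mathscr{D})$, then $H$ and $H'$ are row-equivalent. Conversely, if $\mathscr{D}=\{(\lambda,\ldots,\lambda):\lambda\in\mathbb{F}_{q^k}\}\subseteq\mathbb{F}_{q^k}^m$ and $H,H'$ are row-equivalent, then $Q_H(\mathscr{C},\mathscr{D})=Q_{H'}(\mathscr{C},\mathscr{D})$.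
   Context: $\zeta=e^{2\pi i/p}$. A $\mathrm{BH}(q^k,p)$ matrix is a $q^k\times q^k$ matrix with entries $p$-th roots of unity with $HH^\dagger=q^kI$. Such a matrix with rows indexed by $\mathbb{F}_{q^k}$ and columns by $\mathscr{C}$ can be written $H=[\zeta^{f_\lambda(\mathbf{c})}]_{\lambda\in\mathbb{F}_{q^k},\mathbf{c}\in\mathscr{C}}$ for functions $f_\lambda:\mathscr{C}\to\mathbb{F}_p$. Set $\phi_\lambda=q^{-k/2}\sum_{\mathbf{c}\in\mathscr{C}}\zeta^{f_\lambda(\mathbf{c})}|\mathbf{c}\rangle\in(\mathbb{C}^q)^{\otimes n}$ (where $(\mathbb{C}^q)^{\otimes n}$ has orthonormal basis $|\mathbf{x}\rangle$, $\mathbf{x}\in\mathbb{F}_q^n$), $\Phi_\Lambda=\phi_{\lambda_1}\otimes\cdots\otimes\phi_{\lambda_m}$ for $\Lambda=(\lambda_1,\ldots,\lambda_m)$, and $Q_H(\mathscr{C},\mathscr{D})=\operatorname{span}\{\Phi_\Lambda:\Lambda\in\mathscr{D}\}$. Two such matrices are row-equivalent if one is obtained from the other by permuting rows and multiplying rows by $p$-th roots of unity. *)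

From HB Require Import structures.
From mathcomp Require Import all_boot all_order all_algebra all_fingroup all_field.
Set Implicit Arguments. Unset Strict Implicit. Unset Printing Implicit Defensive.
Import Order.TTheory GRing.Theory Num.Theory.
Local Open Scope ring_scope.

(* A vector of (C^q)^{(x) n} is a function 'rV[F]_n -> algC (coordinates in the
   basis |x>), and a vector of ((C^q)^{(x) n})^{(x) m} is a function on
   'M[F]_(m,n) (row i = the i-th tensor factor's basis label). *)

Section BH.
Variables (F K : finFieldType) (n m : nat) (C : {vspace 'rV[F]_n}).

Definition is_BH (N p : nat) (H : K -> 'rV[F]_n -> algC) : Prop :=
  (forall l c, c \in C -> H l c ^+ p = 1) /\
  (forall l l', \sum_(c : 'rV[F]_n | c \in C) H l c * (H l' c)^* =
                (N * (l == l'))%:R).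

Definition row_equiv (p : nat) (H H' : K -> 'rV[F]_n -> algC) : Prop :=
  exists (sigma : {perm K}) (u : K -> algC),
    (forall l, u l ^+ p = 1) /\
    (forall l c, c \in C -> H' l c = u l * H (sigma l) c).

Definition phi (q k : nat) (H : K -> 'rV[F]_n -> algC) (l : K)
  : 'rV[F]_n -> algC :=
  fun x => if x \in C then (sqrtC (q ^ k)%:R)^-1 * H l x else 0.

Definition Phi (q k : nat) (H : K -> 'rV[F]_n -> algC) (L : 'rV[K]_m)
  : {ffun 'M[F]_(m, n) -> algC^o} :=
  [ffun X : 'M[F]_(m, n) => \prod_(i < m) phi q k H (L 0 i) (row i X)].

Definition QH (q k : nat) (H : K -> 'rV[F]_n -> algC) (D : {vspace 'rV[K]_m})
  : {vspace {ffun 'M[F]_(m, n) -> algC^o}} :=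
  <<[seq Phi q k H L | L <- [seq L <- enum [set: 'rV[K]_m] | L \in D]]>>%VS.

End BH.

From HB Require Import structures.
From mathcomp Require Import all_boot all_order all_algebra all_fingroup all_field.
Import Order.TTheory GRing.Theory Num.Theory.
Local Open Scope ring_scope.
Set Implicit Arguments. Unset Strict Implicit. Unset Printing Implicit Defensive.

(* The vectors phi_l of a BH matrix H are orthonormal and, H being square, they
   form an orthonormal basis of the functions supported on C; hence the Phi_L
   are orthonormal and <Phi'_L, Phi_M> = prod_i a(L_i, M_i), where
   a(l, mu) = <phi'_l, phi_mu>.  If Q_H(C, D) = Q_H'(C, D), then
   <Phi'_L, Phi_M> = 0 whenever L is in D and M is not, so D is closed under
   replacing any coordinate L_i by a mu with a(L_i, mu) <> 0.  Two such mu for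
   the same l would, by the covering hypothesis, put every unit vector in D,
   contradicting dim D < m.  So phi'_l = a(l, sigma l) phi_(sigma l) for a
   single sigma l, sigma is injective by orthogonality, and this is
   row-equivalence.  Conversely, for the diagonal code a row-equivalence
   rescales each generator: Phi'_(l,..,l) = u_l^m Phi_(sigma l,..,sigma l). *)

Definition dotf (T : finType) (f g : T -> algC) := \sum_x f x * (g x)^*.

Lemma dotf_supp (T : finType) (S : {pred T}) (f g : T -> algC) :
  (forall x, x \notin S -> f x = 0) -> dotf f g = \sum_(x in S) f x * (g x)^*.
Proof.
move=> f_supp; rewrite /dotf [RHS]big_mkcond; apply: eq_bigr => x _.
by case: ifPn => // /f_supp ->; rewrite mul0r.
Qed.

Section OrthonormalBasis.
Variables (I T : finType) (S : {pred T}) (e : I -> T -> algC).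
Hypotheses (e_supp : forall i x, x \notin S -> e i x = 0)
  (e_orthonormal : forall i j, dotf (e i) (e j) = (i == j)%:R)
  (card_S : #|S| = #|I|).

Lemma orthonormal_complete x y : x \in S -> y \in S ->
  \sum_i (e i x)^* * e i y = (x == y)%:R.
Proof.
move=> xS yS; pose N := #|I|.
pose col (j : 'I_N) : T := enum_val (cast_ord (esym card_S) j).
have col_inj : injective col by move=> j j' /enum_val_inj /cast_ord_inj.
have col_onto z : z \in S -> exists j, z = col j.
  move=> zS; exists (cast_ord card_S (enum_rank_in zS z)).
  by rewrite /col cast_ordK enum_rankK_in.
have sum_col (G : T -> algC) : \sum_(j < N) G (col j) = \sum_(z in S) G z.
  rewrite [RHS]big_enum_val (reindex (cast_ord (esym card_S))) //.
  by exists (cast_ord card_S) => j _; rewrite ?cast_ordK ?cast_ordKV.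
have sum_row (G : I -> algC) : \sum_(i < N) G (enum_val i) = \sum_i G i.
  by rewrite -big_enum_val; apply: eq_bigl => i; rewrite inE.
pose A : 'M[algC]_N := \matrix_(i, j) e (enum_val i) (col j).
pose A' : 'M[algC]_N := \matrix_(j, i) (e (enum_val i) (col j))^*.
(* [A] is square, so its right inverse [A'] is also a left inverse. *)
have /mulmx1C/matrixP A'A : A *m A' = 1%:M.
  apply/matrixP => i i'; rewrite !mxE.
  under eq_bigr do rewrite !mxE.
  rewrite (sum_col (fun z => e _ z * (e _ z)^*)) -(dotf_supp _ (e_supp _)).
  by rewrite e_orthonormal (inj_eq enum_val_inj).
have [[jx ->] [jy ->]] := (col_onto x xS, col_onto y yS).
move: (A'A jx jy); rewrite !mxE (inj_eq col_inj) => <-.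
by rewrite -(sum_row (fun i => (e i _)^* * e i _)); apply: eq_bigr => i _; rewrite !mxE.
Qed.

Lemma orthonormal_expand f : (forall x, x \notin S -> f x = 0) ->
  forall x, f x = \sum_i dotf f (e i) * e i x.
Proof.
move=> f_supp x.
have -> : \sum_i dotf f (e i) * e i x = \sum_(y in S) f y * \sum_i (e i y)^* * e i x.
  rewrite (eq_bigr _ (fun i _ => congr1 (fun z => z * e i x) (dotf_supp _ f_supp))).
  under eq_bigr do rewrite mulr_suml.
  rewrite exchange_big /=; apply: eq_bigr => y _; rewrite mulr_sumr.
  by apply: eq_bigr => i _; rewrite mulrA.
have [xS | xNS] := boolP (x \in S); last first.
  rewrite f_supp // big1 // => y _; rewrite big1 ?mulr0 // => i _.
  by rewrite (e_supp _ xNS) mulr0.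
rewrite (bigD1 x) //= orthonormal_complete // eqxx mulr1 big1 ?addr0 //.
move=> y /andP [yS nyx].
by rewrite orthonormal_complete // (negbTE nyx) mulr0.
Qed.

End OrthonormalBasis.

Lemma natr_card_neq0 (K : finFieldType) : (#|K|%:R : algC) != 0.
Proof. by rewrite pnatr_eq0 -lt0n; apply/card_gt0P; exists 0. Qed.

Section PhiBasis.
Variables (F K : finFieldType) (n q k p : nat) (C : {vspace 'rV[F]_n}).
Variable H : K -> 'rV[F]_n -> algC.
Hypotheses (qkK : (q ^ k)%N = #|K|) (BH_H : is_BH C (q ^ k) p H).
Local Notation ph := (phi C q k H).

Lemma phi_supp l x : x \notin C -> ph l x = 0.
Proof. by rewrite /phi => /negbTE ->. Qed.

Lemma phi_mem l x : x \in C -> ph l x = (sqrtC #|K|%:R)^-1 * H l x.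
Proof. by rewrite /phi qkK => ->. Qed.

Lemma phi_orthonormal l l' : dotf (ph l) (ph l') = (l == l')%:R.
Proof.
have sqrtK_neq0 : sqrtC #|K|%:R != 0 :> algC by rewrite sqrtC_eq0 natr_card_neq0.
have sqrtK_real : (sqrtC #|K|%:R)^* = sqrtC #|K|%:R :> algC.
  by rewrite geC0_conj ?sqrtC_ge0 ?ler0n.
rewrite (dotf_supp _ (@phi_supp l)).
under eq_bigr => x xC do
  rewrite !phi_mem // rmorphM rmorphV ?unitfE //= sqrtK_real mulrACA.
by rewrite -mulr_sumr BH_H.2 qkK natrM -invfM -expr2 sqrtCK mulKf ?natr_card_neq0.
Qed.

Lemma phi_expand (f : 'rV[F]_n -> algC) : #|C| = #|K| ->
  (forall x, x \notin C -> f x = 0) -> forall x, f x = \sum_mu dotf f (ph mu) * ph mu x.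
Proof.
move=> cardC.
exact: (orthonormal_expand (S := [pred x | x \in C]) phi_supp phi_orthonormal cardC).
Qed.

End PhiBasis.

Arguments phi_supp {F K n q k C H} l x.

Lemma sum_prod_rows (R : comPzSemiRingType) (T : finType) (m n : nat)
    (G : 'I_m -> 'rV[T]_n -> R) :
  \sum_(X : 'M[T]_(m, n)) \prod_i G i (row i X) = \prod_i \sum_x G i x.
Proof.
rewrite bigA_distr_bigA (reindex (fun X : 'M[T]_(m, n) => [ffun i => row i X])) /=.
  by apply: eq_bigr => X _; apply: eq_bigr => i _; rewrite ffunE.
exists (fun f : {ffun 'I_m -> 'rV[T]_n} => \matrix_(i, j) f i 0 j) => [X _|f _].
  by apply/matrixP => i j; rewrite !mxE ffunE mxE.
by apply/ffunP => i; apply/rowP => j; rewrite ffunE !mxE.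
Qed.

Lemma dotf_memv_span (T : finType) (s : seq {ffun T -> algC^o}) v (w : T -> algC) :
  v \in <<s>>%VS -> (forall u, u \in s -> dotf u w = 0) -> dotf v w = 0.
Proof.
move=> /(coord_span (X := in_tuple s)) -> s_orth.
rewrite /dotf; under eq_bigr do rewrite sum_ffunE mulr_suml.
rewrite exchange_big big1 // => i _.
under eq_bigr do rewrite ffunE -mulrA.
by rewrite -mulr_sumr -/(dotf _ w) s_orth ?mulr0 // mem_nth ?size_tuple.
Qed.

Section TensorProducts.
Variables (F K : finFieldType) (n m q k : nat) (C : {vspace 'rV[F]_n}).

Lemma dotf_Phi (H1 H2 : K -> 'rV[F]_n -> algC) (L M : 'rV[K]_m) :
  dotf (Phi C q k H1 L) (Phi C q k H2 M) =
  \prod_i dotf (phi C q k H1 (L 0 i)) (phi C q k H2 (M 0 i)).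
Proof.
rewrite /dotf -sum_prod_rows; apply: eq_bigr => X _.
by rewrite !ffunE rmorph_prod -big_split.
Qed.

Lemma Phi_mem_QH (H : K -> 'rV[F]_n -> algC) (D : {vspace 'rV[K]_m}) L :
  L \in D -> Phi C q k H L \in QH C q k H D.
Proof.
by move=> LD; apply/memv_span/map_f; rewrite mem_filter LD mem_enum in_setT.
Qed.

Variables (p : nat) (H : K -> 'rV[F]_n -> algC).
Hypotheses (qkK : (q ^ k)%N = #|K|) (BH_H : is_BH C (q ^ k) p H).

Lemma Phi_orthogonal (L M : 'rV[K]_m) : L != M ->
  dotf (Phi C q k H L) (Phi C q k H M) = 0.
Proof.
move=> neq_LM; have /existsP [i neq_LMi] : [exists i, L 0 i != M 0 i].
  apply: contraNT neq_LM => /existsPn eq_LM.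
  by apply/eqP/rowP => i; apply/eqP/negPn/eq_LM.
by rewrite dotf_Phi (bigD1 i) //= (phi_orthonormal qkK BH_H) (negbTE neq_LMi) mul0r.
Qed.

Lemma QH_orthogonal (D : {vspace 'rV[K]_m}) (M : 'rV[K]_m) v :
  M \notin D -> v \in QH C q k H D -> dotf v (Phi C q k H M) = 0.
Proof.
move=> MND /dotf_memv_span -> // u /mapP [L]; rewrite mem_filter => /andP [LD _] ->.
by apply: Phi_orthogonal; apply: contraNneq MND => <-.
Qed.

End TensorProducts.

Lemma delta_mx_fullv (R : fieldType) (m : nat) (D : {vspace 'rV[R]_m}) :
  (forall i, delta_mx 0 i \in D) -> D = fullv.
Proof.
move=> deltaD; apply/eqP; rewrite eqEsubv subvf /=; apply/subvP => v _.
by rewrite (matrix_sum_delta v) big_ord1; apply: memv_suml => i _; rewrite memvZ.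
Qed.

Section Rigidity.
Variables (F K : finFieldType) (n m q k p : nat) (C : {vspace 'rV[F]_n}).
Variables (H H' : K -> 'rV[F]_n -> algC) (D : {vspace 'rV[K]_m}).
Hypotheses (qkK : (q ^ k)%N = #|K|) (cardC : #|C| = #|K|).
Hypotheses (BH_H : is_BH C (q ^ k) p H) (BH_H' : is_BH C (q ^ k) p H').
Hypotheses (D_proper : (\dim D < m)%N)
  (D_cover : forall i, exists2 d, d \in D & d 0 i = 1)
  (QH_eq : QH C q k H D = QH C q k H' D).

Local Notation ph := (phi C q k H).
Local Notation ph' := (phi C q k H').

Local Notation overlap l mu := (dotf (ph' l) (ph mu)).

Lemma overlap_closed (L M : 'rV[K]_m) :
  L \in D -> (forall i, overlap (L 0 i) (M 0 i) != 0) -> M \in D.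
Proof.
move=> LD overlap_LM; apply: contraT => MND.
have PhiL : Phi C q k H' L \in QH C q k H D by rewrite QH_eq Phi_mem_QH.
have : \prod_i overlap (L 0 i) (M 0 i) != 0 by apply/prodf_neq0 => i _.
by rewrite -dotf_Phi (QH_orthogonal qkK BH_H MND PhiL) eqxx.
Qed.

Lemma overlap_exists l : exists mu, overlap l mu != 0.
Proof.
apply/existsP; apply: contraT => /existsPn overlap0.
have ph'0 x : ph' l x = 0.
  rewrite (phi_expand qkK BH_H cardC (phi_supp l)) big1 // => mu _.
  by move: (overlap0 mu); rewrite negbK => /eqP ->; rewrite mul0r.
have := phi_orthonormal qkK BH_H' l l; rewrite eqxx /dotf big1 => [/eqP|x _].
  by rewrite eq_sym oner_eq0.
by rewrite ph'0 mul0r.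
Qed.

Let sigma l := odflt l [pick mu | overlap l mu != 0].

Lemma overlap_sigma l : overlap l (sigma l) != 0.
Proof.
by rewrite /sigma; case: pickP => [//|none]; have [mu] := overlap_exists l; rewrite none.
Qed.

Lemma delta_mx_mem l mu mu' i : overlap l mu != 0 -> overlap l mu' != 0 ->
  mu != mu' -> delta_mx 0 i \in D.
Proof.
move=> ov_mu ov_mu' neq_mu; have [d dD di] := D_cover i.
pose M nu : 'rV[K]_m := \row_j (if j == i then nu else sigma (l * d 0 j)).
have MD nu : overlap l nu != 0 -> M nu \in D.
  move=> ov_nu; apply: (@overlap_closed (l *: d)); first by rewrite memvZ.
  move=> j; rewrite !mxE; case: (eqVneq j i) => [-> | _]; last exact: overlap_sigma.
  by rewrite di mulr1.
(* [M mu] and [M mu'] lie in [D] and differ only in coordinate [i]. *)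
have <- : (mu - mu')^-1 *: (M mu - M mu') = delta_mx 0 i.
  apply/rowP => j; rewrite !mxE eqxx /=.
  case: (eqVneq j i) => _; last by rewrite subrr mulr0.
  by rewrite mulVf // subr_eq0.
by rewrite memvZ // memvB // MD.
Qed.

Lemma overlap_unique l mu : overlap l mu != 0 -> mu = sigma l.
Proof.
move=> ov_mu; apply/eqP; apply: contraT => neq_mu.
have /delta_mx_fullv D_full i : delta_mx 0 i \in D.
  exact: delta_mx_mem ov_mu (overlap_sigma l) neq_mu.
by move: D_proper; rewrite D_full dimvf /dim /= mul1n ltnn.
Qed.

Lemma phi_sigma l x : ph' l x = overlap l (sigma l) * ph (sigma l) x.
Proof.
rewrite (phi_expand qkK BH_H cardC (phi_supp l)) (bigD1 (sigma l)) //=.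
rewrite big1 ?addr0 // => mu.
by have [-> _|/overlap_unique -> /eqP //] := eqVneq (overlap l mu) 0; rewrite mul0r.
Qed.

Lemma sigma_inj : injective sigma.
Proof.
move=> l1 l2 eq_sigma; apply/eqP; apply: contraT => neq_l.
have := phi_orthonormal qkK BH_H' l1 l2; rewrite (negbTE neq_l).
have -> : dotf (ph' l1) (ph' l2) = overlap l1 (sigma l1) *
    (overlap l2 (sigma l2))^* * dotf (ph (sigma l1)) (ph (sigma l2)).
  rewrite /dotf mulr_sumr; apply: eq_bigr => x _.
  by rewrite !phi_sigma rmorphM mulrACA.
rewrite eq_sigma (phi_orthonormal qkK BH_H) eqxx mulr1 => /eqP.
by rewrite mulf_eq0 conjC_eq0 -{1}eq_sigma !(negbTE (overlap_sigma _)).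
Qed.

Theorem row_equiv_of_QH_eq : row_equiv C p H H'.
Proof.
have H'_sigma l c : c \in C -> H' l c = overlap l (sigma l) * H (sigma l) c.
  move=> cC; apply: (mulfI (x := (sqrtC #|K|%:R)^-1)).
    by rewrite invr_eq0 sqrtC_eq0 natr_card_neq0.
  by have := phi_sigma l c; rewrite !phi_mem // => ->; rewrite mulrCA.
exists (perm sigma_inj), (fun l => overlap l (sigma l)); split=> [l | l c cC].
  have := BH_H'.1 l 0 (mem0v C).
  by rewrite H'_sigma ?mem0v // exprMn BH_H.1 ?mem0v // mulr1.
by rewrite permE H'_sigma.
Qed.

End Rigidity.

Section RowEquivalence.
Variables (F K : finFieldType) (n m q k p : nat) (C : {vspace 'rV[F]_n}).
Implicit Type H : K -> 'rV[F]_n -> algC.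

Lemma row_equiv_sym H H' : (0 < p)%N -> row_equiv C p H H' -> row_equiv C p H' H.
Proof.
move=> p_gt0 [sigma [u [u_root H'E]]].
have u_neq0 l : u l != 0.
  apply/eqP => u0; move: (u_root l).
  by rewrite u0 expr0n gtn_eqF // => /eqP; rewrite eq_sym oner_eq0.
exists sigma^-1%g, (fun l => (u (sigma^-1%g l))^-1); split=> [l | l c cC].
  by rewrite exprVn u_root invr1.
by rewrite H'E // permKV mulKf.
Qed.

Lemma QH_diag_subv H H' (D : {vspace 'rV[K]_m}) :
  (forall d, d \in D <-> exists l, d = const_mx l) ->
  row_equiv C p H H' -> (QH C q k H' D <= QH C q k H D)%VS.
Proof.
move=> D_diag [sigma [u [_ H'E]]].
apply/span_subvP => v /mapP [L]; rewrite mem_filter => /andP [LD _] ->.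
have [l ->] := (D_diag L).1 LD.
have -> : Phi C q k H' (const_mx l : 'rV_m) =
    u l ^+ m *: Phi C q k H (const_mx (sigma l)).
  apply/ffunP => X; rewrite !ffunE -[_ *: _]/(_ * _).
  rewrite -[m in u l ^+ m]card_ord -prodr_const -big_split.
  apply: eq_bigr => i _; rewrite !mxE /phi.
  by case: ifP => [/H'E -> | _] /=; rewrite ?mulr0 // mulrCA.
by rewrite memvZ // Phi_mem_QH //; apply/D_diag; exists (sigma l).
Qed.

End RowEquivalence.

Theorem proposition2p4 (p r n k m : nat) (F K : finFieldType)
  (C : {vspace 'rV[F]_n}) (H H' : K -> 'rV[F]_n -> algC) :
  prime p -> #|F| = (p ^ r)%N -> #|K| = ((p ^ r) ^ k)%N -> \dim C = k ->
  is_BH C ((p ^ r) ^ k) p H -> is_BH C ((p ^ r) ^ k) p H' ->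
  (forall (s : nat) (D : {vspace 'rV[K]_m}),
      \dim D = s -> (0 < s < m)%N ->
      (forall i : 'I_m, exists2 d : 'rV[K]_m, d \in D & d 0 i = 1) ->
      QH C (p ^ r) k H D = QH C (p ^ r) k H' D ->
      row_equiv C p H H')
  /\
  (forall D : {vspace 'rV[K]_m},
      (forall d : 'rV[K]_m, d \in D <-> exists l : K, d = const_mx l) ->
      row_equiv C p H H' ->
      QH C (p ^ r) k H D = QH C (p ^ r) k H' D).
Proof.
move=> p_prime cardF cardK dimC BH_H BH_H'.
have qkK : ((p ^ r) ^ k)%N = #|K| by rewrite cardK.
have cardC : #|C| = #|K| by rewrite card_vspace cardF dimC cardK.
split=> [s D dimD /andP [_ s_lt_m] D_cover QH_eq | D D_diag equiv_HH'].
  by apply: (row_equiv_of_QH_eq qkK cardC BH_H BH_H' _ D_cover QH_eq); rewrite dimD.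
apply/eqP; rewrite eqEsubv (QH_diag_subv _ _ D_diag equiv_HH') andbT.
exact: QH_diag_subv _ _ D_diag (row_equiv_sym (prime_gt0 p_prime) equiv_HH').
Qed.
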